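(* Let $\mathcal{U}\subseteq\mathcal{E}$ be any dead-ending universe. Then $\mathcal{D}(\mathcal{U}\cap\mathcal{L})=\mathcal{U}$.
   Context: Games are finite partizan games. A universe is a set of games closed under options, disjunctive sums, conjugates (swapping roles of Left and Right), and forming $\{\mathscr{G}^L\mid\mathscr{G}^R\}$ from nonempty finite subsets of it. $\mathcal{D}(\mathcal{A})$ denotes the smallest universe containing $\mathcal{A}$. A Left (Right) end has no Left (Right) option; a Left (Right) dead-end is a game all of whose subpositions are Left (Right) ends; $\mathcal{L}$ is the set of Left dead-ends. $\mathcal{E}$ is the set of games every end-subposition of which is a (Left or Right) dead-end; a universe contained in $\mathcal{E}$ is dead-ending. *)

From Stdlib Require Import List.
Import ListNotations.

(* A game form {G^L | G^R}; finiteness is built into the inductive type. *)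
Inductive game : Type := Game : list game -> list game -> game.

Definition leftopts (G : game) : list game := let 'Game l _ := G in l.
Definition rightopts (G : game) : list game := let 'Game _ r := G in r.

(* Identity of game forms: the option *sets* coincide (up to identity),
   so order and repetition in the option lists are irrelevant. *)
Inductive ident : game -> game -> Prop :=
| ident_intro gl gr hl hr :
    (forall g, In g gl -> exists h, In h hl /\ ident g h) ->
    (forall h, In h hl -> exists g, In g gl /\ ident g h) ->
    (forall g, In g gr -> exists h, In h hr /\ ident g h) ->
    (forall h, In h hr -> exists g, In g gr /\ ident g h) ->
    ident (Game gl gr) (Game hl hr).

Fixpoint conj (G : game) : game :=
  match G with Game l r => Game (map conj r) (map conj l) end.

Fixpoint add (G : game) : game -> game :=
  fix add_aux (H : game) : game :=
    match G, H with
    | Game gl gr, Game hl hr =>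
        Game (map (fun g => add g H) gl ++ map add_aux hl)
             (map (fun g => add g H) gr ++ map add_aux hr)
    end.

Inductive subpos : game -> game -> Prop :=
| sp_refl G : subpos G G
| sp_left gl gr g H : In g gl -> subpos H g -> subpos H (Game gl gr)
| sp_right gl gr g H : In g gr -> subpos H g -> subpos H (Game gl gr).

Definition left_end (G : game) : Prop := leftopts G = [].
Definition right_end (G : game) : Prop := rightopts G = [].

Definition left_dead_end (G : game) : Prop :=
  forall H, subpos H G -> left_end H.
Definition right_dead_end (G : game) : Prop :=
  forall H, subpos H G -> right_end H.

Definition gset := game -> Prop.

Definition Lset : gset := left_dead_end.

Definition Eset : gset := fun G =>
  forall H, subpos H G -> (left_end H \/ right_end H) ->
    (left_dead_end H \/ right_dead_end H).

Record universe (U : gset) : Prop := {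
  univ_ident : forall G H, U G -> ident G H -> U H;
  univ_left_opt : forall G g, U G -> In g (leftopts G) -> U g;
  univ_right_opt : forall G g, U G -> In g (rightopts G) -> U g;
  univ_add : forall G H, U G -> U H -> U (add G H);
  univ_conj : forall G, U G -> U (conj G);
  univ_form : forall l r, l <> [] -> r <> [] ->
    (forall g, In g l -> U g) -> (forall g, In g r -> U g) -> U (Game l r)
}.

Definition Dgen (A : gset) : gset := fun G =>
  forall V, universe V -> (forall H, A H -> V H) -> V G.

(* A game with options on both sides is formed from its
   options, which lie in U. A game of U without Left options is, because U is
   dead-ending, a Left dead-end, so it lies in U ∩ L. A game of U without Right
   options is a Right dead-end; its conjugate is then a Left dead-end of U, and
   G is the conjugate of that game. *)
From Stdlib Require Import List.
Import ListNotations.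

Section GameInduction.

Variable P : game -> Prop.
Hypothesis IH : forall l r,
  (forall g, In g l -> P g) -> (forall g, In g r -> P g) -> P (Game l r).

Fixpoint game_opt_ind (G : game) : P G :=
  match G with
  | Game l r =>
      let fix all_in (s : list game) : forall g, In g s -> P g :=
        match s with
        | [] => fun g Hg => False_ind _ Hg
        | x :: s' => fun g Hg =>
            match Hg with
            | or_introl e => eq_ind x P (game_opt_ind x) g e
            | or_intror Hg' => all_in s' g Hg'
            end
        end in
      IH l r (all_in l) (all_in r)
  end.

End GameInduction.

Lemma left_dead_end_Game l r :
  left_dead_end (Game l r) <-> l = [] /\ forall g, In g r -> left_dead_end g.
Proof.
  split.
  - intros Hd. split.
    + exact (Hd _ (sp_refl _)).
    + intros g Hg H HH. apply Hd. eapply sp_right; eauto.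
  - intros [-> Hr] H HH. inversion HH; subst.
    + reflexivity.
    + contradiction.
    + eapply Hr; eauto.
Qed.

Lemma right_dead_end_Game l r :
  right_dead_end (Game l r) <-> r = [] /\ forall g, In g l -> right_dead_end g.
Proof.
  split.
  - intros Hd. split.
    + exact (Hd _ (sp_refl _)).
    + intros g Hg H HH. apply Hd. eapply sp_left; eauto.
  - intros [-> Hl] H HH. inversion HH; subst.
    + reflexivity.
    + eapply Hl; eauto.
    + contradiction.
Qed.

Lemma left_dead_end_conj G : right_dead_end G -> left_dead_end (conj G).
Proof.
  revert G.
  apply (game_opt_ind (fun G => right_dead_end G -> left_dead_end (conj G))).
  intros l r IHl _ Hd.
  apply right_dead_end_Game in Hd as [-> Hl]. simpl.
  apply left_dead_end_Game. split; [reflexivity|].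
  intros g Hg. apply in_map_iff in Hg as [x [<- Hx]]. auto.
Qed.

Lemma conjK G : conj (conj G) = G.
Proof.
  revert G. apply (game_opt_ind (fun G => conj (conj G) = G)).
  intros l r IHl IHr. simpl.
  rewrite !map_map. f_equal.
  - rewrite <- (map_id l) at 2. apply map_ext_in. auto.
  - rewrite <- (map_id r) at 2. apply map_ext_in. auto.
Qed.

(* The zero game [Game [] []] is the only game that is both a Left end and a
   Right dead-end, and it is a Left dead-end too. *)
Lemma Eset_left_end_dead G : Eset G -> left_end G -> left_dead_end G.
Proof.
  intros HE Hend.
  destruct (HE G (sp_refl _) (or_introl Hend)) as [Hd | Hd]; [exact Hd|].
  destruct G as [l r]. unfold left_end in Hend; simpl in Hend; subst l.
  apply right_dead_end_Game in Hd as [-> _].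
  apply left_dead_end_Game. split; [reflexivity | intros g []].
Qed.

Lemma Eset_right_end_dead G : Eset G -> right_end G -> right_dead_end G.
Proof.
  intros HE Hend.
  destruct (HE G (sp_refl _) (or_intror Hend)) as [Hd | Hd]; [|exact Hd].
  destruct G as [l r]. unfold right_end in Hend; simpl in Hend; subst r.
  apply left_dead_end_Game in Hd as [-> _].
  apply right_dead_end_Game. split; [reflexivity | intros g []].
Qed.

Lemma dead_ending_universe_sub U V :
  universe U -> universe V -> (forall G, U G -> Eset G) ->
  (forall G, U G -> Lset G -> V G) ->
  forall G, U G -> V G.
Proof.
  intros HU HV HE HUL. apply (game_opt_ind (fun G => U G -> V G)). intros l r IHl IHr HG.
  destruct l as [|a l].
  - apply HUL; [exact HG|].
    apply Eset_left_end_dead; [exact (HE _ HG) | reflexivity].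
  - destruct r as [|b r].
    + rewrite <- conjK. apply (univ_conj V HV), HUL.
      * exact (univ_conj U HU _ HG).
      * apply left_dead_end_conj, Eset_right_end_dead;
          [exact (HE _ HG) | reflexivity].
    + apply (univ_form V HV); try discriminate.
      * intros g Hg. exact (IHl g Hg (univ_left_opt U HU _ _ HG Hg)).
      * intros g Hg. exact (IHr g Hg (univ_right_opt U HU _ _ HG Hg)).
Qed.

Theorem mainTheorem10 (U : gset) :
  universe U -> (forall G, U G -> Eset G) ->
  forall G, Dgen (fun H => U H /\ Lset H) G <-> U G.
Proof.
  intros HU HE G. split.
  - intros HD. apply HD; [exact HU | tauto].
  - intros HG V HV HA.
    apply (dead_ending_universe_sub U V HU HV HE); [|exact HG].
    intros H HUH HLH. apply HA. split; assumption.
Qed.
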